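(* In the setting described in the context, if $m\in S$ then $g_m\in\widetilde{I}$.
   Context: $\Phi$ is a commutative ring with unity $1\ne0$, regarded as a differential ring with the commuting derivations $\delta_1,\delta_2$ acting as zero. $S\subseteq\mathbb{N}$ is recursively enumerable and $M$ is a two-tape acyclic Minsky machine with states $q_0,\ldots,q_n$ ($q_0$ terminal) such that for every $x\in\mathbb{N}$, starting at configuration $[1,2^{2^x},0]$, $M$ reaches $[0,1,0]$ in finitely many steps if $x\in S$ and operates infinitely if $x\notin S$. Minsky machine conventions: two tapes infinite to the right with cells $0,1,2,\ldots$; cell $0$ contains $1$, all others $0$; a configuration $[i,a,b]$ means state $q_i$, head at cell $a$ of tape 1 and cell $b$ of tape 2. Commands are $q_i\varepsilon\sigma\to q_jT_\alpha T_\beta$ with $1\le i\le n$, $0\le j\le n$, $\varepsilon,\sigma\in\{0,1\}$, $\alpha,\beta\in\{-1,0,1\}$, $\alpha\ge0$ if $\varepsilon=1$, $\beta\ge0$ if $\sigma=1$, at most one per triple $(i,\varepsilon,\sigma)$; such a command applies to $[i,a,b]$ when ($\varepsilon=1$ iff $a=0$) and ($\sigma=1$ iff $b=0$), producing $[j,a+\alpha,b+\beta]$. Acyclic means no configuration recurs after a positive number of steps. $A=\Phi\{x_1,x_2,q_0,\ldots,q_n\}$ is the differential polynomial ring w.r.t. $\delta_1,\delta_2$ (polynomial ring in independent variables $\delta_1^a\delta_2^b(y)$, $y\in\{x_1,x_2,q_0,\ldots,q_n\}$, $\delta_1,\delta_2$ raising the corresponding exponent). $J$ is the differential ideal generated by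 $\delta_1(x_2),\delta_2(x_1)$, and $B=A/J$. For each command of $M$, $g(i,\varepsilon,\sigma)$ is the image in $B$ of $x_1^{\varepsilon}x_2^{\sigma}\delta_1^{1-\varepsilon}\delta_2^{1-\sigma}(q_i)-x_1^{\varepsilon}x_2^{\sigma}\delta_1^{1-\varepsilon+\alpha}\delta_2^{1-\sigma+\beta}(q_j)$; $\widetilde{I}$ is the differential ideal of $B$ generated by all $g(i,\varepsilon,\sigma)$; and $g_m$ is the image in $B$ of $x_1x_2\delta_1^{2^{2^m}}(q_1)-x_1x_2\delta_1(q_0)$. *)

From HB Require Import structures.
From mathcomp Require Import all_boot all_algebra.
From mathcomp Require Import finmap.
From mathcomp.multinomials Require Import monalg.

Set Implicit Arguments.
Unset Strict Implicit.
Unset Printing Implicit Defensive.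

Import GRing.Theory.
Local Open Scope ring_scope.

(* A machine with states q_0..q_n is given by n and a partial command  *)
(* table  cmd i eps sig = Some (j, alpha, beta)  encoding the command  *)
(* q_i eps sig -> q_j T_alpha T_beta  (at most one per triple, since   *)
(* cmd is a function).                                                 *)

Definition minsky_cmd := nat -> bool -> bool -> option (nat * int * int).

Definition minsky_wf (n : nat) (cmd : minsky_cmd) : Prop :=
  forall i e s j al be, cmd i e s = Some (j, al, be) ->
    [/\ (1 <= i <= n)%N, (j <= n)%N,
        -1 <= al <= 1, -1 <= be <= 1 &
        ((e -> 0 <= al) /\ (s -> 0 <= be))].

Definition config := (nat * nat * nat)%type.

Definition mstep (cmd : minsky_cmd) (c : config) : option config :=
  let: (i, a, b) := c in
  match cmd i (a == 0)%N (b == 0)%N with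
  | Some (j, al, be) => Some (j, absz (a%:Z + al), absz (b%:Z + be))
  | None => None
  end.

Fixpoint mrun (cmd : minsky_cmd) (k : nat) (c : config) : option config :=
  match k with
  | 0 => Some c
  | k'.+1 => obind (mstep cmd) (mrun cmd k' c)
  end.

Definition macyclic (cmd : minsky_cmd) : Prop :=
  forall (c : config) (k : nat), (0 < k)%N -> mrun cmd k c <> Some c.

Definition mreaches (cmd : minsky_cmd) (c c' : config) : Prop :=
  exists k, mrun cmd k c = Some c'.

Definition mdiverges (cmd : minsky_cmd) (c : config) : Prop :=
  forall k, mrun cmd k c <> None.

(* The differential polynomial ring A = Phi{x1, x2, q_0, ..., q_n}.     *)
(* Differential indeterminates: inl false = x1, inl true = x2,          *)
(* inr i = q_i.  The polynomial variable (y, a, b) stands for           *)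
(* delta1^a delta2^b (y).                                               *)

Definition dind (n : nat) := (bool + 'I_n.+1)%type.
Definition dvarT (n : nat) := (dind n * nat * nat)%type.

Definition dpoly (Phi : comNzRingType) (n : nat) := {malg Phi[{cmonom dvarT n}]}.

Definition X1 {n} : dind n := inl false.
Definition X2 {n} : dind n := inl true.
Definition Q {n} (i : nat) : dind n := inr (inord i).

Definition dv {Phi : comNzRingType} {n : nat} (y : dind n) (a b : nat)
  : dpoly Phi n := << ucm ((y, a, b) : dvarT n) >>.

Definition sh1 {n} (v : dvarT n) : dvarT n := (v.1.1, v.1.2.+1, v.2).
Definition sh2 {n} (v : dvarT n) : dvarT n := (v.1.1, v.1.2, v.2.+1).

Definition dmonom {Phi : comNzRingType} {n : nat} (sh : dvarT n -> dvarT n)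
  (m : {cmonom dvarT n}) : dpoly Phi n :=
  \sum_(v <- finsupp m)
     (m v)%:R * << divcm m (ucm v) >> * << ucm (sh v) >>.

(* the Phi-linear derivation determined by delta(y_v) = y_(sh v),
   delta(Phi) = 0 *)
Definition dder {Phi : comNzRingType} {n : nat} (sh : dvarT n -> dvarT n)
  (p : dpoly Phi n) : dpoly Phi n :=
  \sum_(m <- msupp p) p@_m *: dmonom sh m.

Definition delta1 {Phi : comNzRingType} {n : nat} := @dder Phi n sh1.
Definition delta2 {Phi : comNzRingType} {n : nat} := @dder Phi n sh2.

Inductive dideal {Phi : comNzRingType} {n : nat} (G : dpoly Phi n -> Prop)
  : dpoly Phi n -> Prop :=
| dideal_gen g : G g -> dideal G g
| dideal_0 : dideal G 0
| dideal_add p q : dideal G p -> dideal G q -> dideal G (p + q)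
| dideal_mul r p : dideal G p -> dideal G (r * p)
| dideal_d1 p : dideal G p -> dideal G (delta1 p)
| dideal_d2 p : dideal G p -> dideal G (delta2 p).

(* lift to A of the generator g(i, eps, sig) attached to the command
   q_i eps sig -> q_j T_al T_be *)
Definition gcmd {Phi : comNzRingType} {n : nat} (i : nat) (e s : bool)
  (j : nat) (al be : int) : dpoly Phi n :=
  (dv X1 0 0) ^+ e * (dv X2 0 0) ^+ s * dv (Q i) (1 - e) (1 - s)
  - (dv X1 0 0) ^+ e * (dv X2 0 0) ^+ s
      * dv (Q j) (absz (1 - e%:Z + al)) (absz (1 - s%:Z + be)).

(* generators of J (delta1 x2, delta2 x1) together with the lifts of
   all g(i, eps, sig).  The preimage in A of the differential ideal
   I~ of B = A/J is the differential ideal of A generated by these. *)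
Definition Igens {Phi : comNzRingType} {n : nat} (cmd : minsky_cmd)
  (p : dpoly Phi n) : Prop :=
  p = dv X2 1 0 \/ p = dv X1 0 1 \/
  exists i e s j al be, cmd i e s = Some (j, al, be) /\ p = gcmd i e s j al be.

Definition gm {Phi : comNzRingType} {n : nat} (m : nat) : dpoly Phi n :=
  dv X1 0 0 * dv X2 0 0 * dv (Q 1) (2 ^ (2 ^ m)) 0
  - dv X1 0 0 * dv X2 0 0 * dv (Q 0) 1 0.

From HB Require Import structures.
From mathcomp Require Import all_boot all_algebra.
From mathcomp Require Import finmap.
From mathcomp.multinomials Require Import monalg.
From mathcomp Require Import ring zify.

Set Implicit Arguments.
Unset Strict Implicit.
Unset Printing Implicit Defensive.

Import GRing.Theory.
Local Open Scope ring_scope.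

(* Modulo J we have delta2 x1 = delta1 x2 = 0, so delta1 commutes with
   multiplication by x2 and delta2 with multiplication by x1.  Encode the
   configuration [i, a, b] by x1 x2 delta1^a delta2^b (q_i).  A command that
   applies at [i, a, b] has eps = 1 exactly when a = 0 (and sigma = 1 exactly
   when b = 0), so applying delta1^(a-1) when a > 0 and delta2^(b-1) when
   b > 0 to its generator and multiplying by the missing variables among
   x1, x2 gives the difference of the encodings of [i, a, b] and of its
   successor.  Along the halting run from [1, 2^(2^m), 0] to [0, 1, 0]
   these differences telescope to g_m. *)

Lemma abszD1_addn (z : int) (k : nat) : -1 <= z -> (absz (1 + z)%R + k)%N = absz (k.+1%:Z + z).
Proof. by lia. Qed.

Lemma malgMUU (K : monomType) (R : nzRingType) (k1 k2 : K) :
  (<< k1 >> : {malg R[K]}) * << k2 >> = << mmul k1 k2 >>.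
Proof. by rewrite malgM_def fgmulUU mulr1. Qed.

Section CommutativeMonomials.
Variable I : choiceType.

Lemma divcm_ucmm (u : I) : divcm (ucm u) (ucm u) = mone.
Proof. by apply/eqP/cmP => i; rewrite divcmE cm1 subnn. Qed.

Lemma divcm_ucmMl (u w : I) : u != w -> divcm (mmul (ucm u) (ucm w)) (ucm u) = ucm w.
Proof.
move=> uw; apply/eqP/cmP => i; rewrite divcmE !cmM !cmU.
by case: (u =P i) => [e|_]; case: (w =P i).
Qed.

Lemma divcm_ucmMr (u w : I) : u != w -> divcm (mmul (ucm u) (ucm w)) (ucm w) = ucm u.
Proof.
move=> uw; apply/eqP/cmP => i; rewrite divcmE !cmM !cmU.
by case: (u =P i) => [e|_]; case: (w =P i).
Qed.

End CommutativeMonomials.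

Section Derivation.
Variables (Phi : comNzRingType) (n : nat) (sh : dvarT n -> dvarT n).
Implicit Types (p q : dpoly Phi n) (v w : dvarT n).

Lemma dderE p : dder sh p = mmap (@malgC _ Phi) (@dmonom Phi n sh) p.
Proof. by rewrite /dder mmapE; apply: eq_bigr => m _; rewrite mul_malgC. Qed.

Lemma dderB p q : dder sh (p - q) = dder sh p - dder sh q.
Proof. by rewrite !dderE mmapB. Qed.

Lemma dderU v : dder sh << ucm v >> = << ucm (sh v) >> :> dpoly Phi n.
Proof.
by rewrite dderE mmapU /dmonom mdomU big_seq_fset1 cmUU divcm_ucmm !mul1r.
Qed.

Lemma dderUU v w : v != w ->
  dder sh (<< ucm v >> * << ucm w >>) =
  << ucm (sh v) >> * << ucm w >> + << ucm v >> * << ucm (sh w) >> :> dpoly Phi n.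
Proof.
move=> vw; transitivity (dder sh (<< mmul (ucm v) (ucm w) >> : dpoly Phi n)).
  by congr dder; apply: malgMUU.
rewrite dderE mmapU /dmonom mdomD !mdomU big_fsetU1 ?inE // big_seq_fset1.
rewrite divcm_ucmMl // divcm_ucmMr // !cmM !cmUU !cmU (negbTE vw) eq_sym (negbTE vw) /=.
rewrite addn0 add0n mulr1n mpolyC1E.
have mul1E (R : comNzRingType) (a b c d : R) :
  1 * (1 * a * b + 1 * c * d) = b * a + c * d by rewrite !mul1r (mulrC a).
exact: mul1E.
Qed.

Lemma iter_dderB k p q :
  iter k (dder sh) (p - q) = iter k (dder sh) p - iter k (dder sh) q.
Proof. by elim: k => //= k ->; rewrite dderB. Qed.

Lemma iter_dderU k v :
  iter k (dder sh) (<< ucm v >> : dpoly Phi n) = << ucm (iter k sh v) >>.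
Proof. elim: k => [//|k IH] /=; rewrite IH; exact: dderU. Qed.

End Derivation.

Lemma iter_sh1 n k (y : dind n) a b : iter k sh1 ((y, a, b) : dvarT n) = (y, a + k, b)%N.
Proof. by elim: k => [|k IH] /=; rewrite ?addn0 // IH addnS. Qed.

Lemma iter_sh2 n k (y : dind n) a b : iter k sh2 ((y, a, b) : dvarT n) = (y, a, b + k)%N.
Proof. by elim: k => [|k IH] /=; rewrite ?addn0 // IH addnS. Qed.

Section DifferentialIdeal.
Variables (Phi : comNzRingType) (n : nat) (G : dpoly Phi n -> Prop).
Local Notation I := (dideal G).

Lemma dideal_sub p q : I p -> I q -> I (p - q).
Proof. by move=> Ip Iq; rewrite -mulN1r; apply: dideal_add Ip (dideal_mul _ Iq). Qed.

Variable sh : dvarT n -> dvarT n.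
Hypothesis dideal_dder : forall p, I p -> I (dder sh p).

Lemma dideal_iter_dder k p : I p -> I (iter k (dder sh) p).
Proof. by elim: k => [//|k IH] Ip /=; apply/dideal_dder/IH. Qed.

Lemma dideal_iter_dderU k v w :
  I (<< ucm v >> - << ucm w >>) -> I (<< ucm (iter k sh v) >> - << ucm (iter k sh w) >>).
Proof.
have shiftE := congr2 (fun p q => p - q) (iter_dderU Phi sh k v) (iter_dderU Phi sh k w).
by move=> /(dideal_iter_dder k); rewrite iter_dderB shiftE.
Qed.

(* Modulo the ideal, delta (x y) = x delta y when delta x lies in it; the
   orbit conditions keep x and y distinct variables at every step. *)
Lemma dideal_iter_dderUM x v w k :
  I << ucm (sh x) >> -> (forall l, x != iter l sh v) -> (forall l, x != iter l sh w) ->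
  I (<< ucm x >> * << ucm v >> - << ucm x >> * << ucm w >>) ->
  I (<< ucm x >> * << ucm (iter k sh v) >> - << ucm x >> * << ucm (iter k sh w) >>).
Proof.
move=> Ix xv xw I0; elim: k => [//|k IH] /=.
set vk := iter k sh v; set wk := iter k sh w.
have leibnizE : dder sh (<< ucm x >> * << ucm vk >> - << ucm x >> * << ucm wk >> : dpoly Phi n) =
    << ucm (sh x) >> * << ucm vk >> + << ucm x >> * << ucm (sh vk) >>
  - (<< ucm (sh x) >> * << ucm wk >> + << ucm x >> * << ucm (sh wk) >>).
  by rewrite dderB; congr (_ - _); [exact: dderUU (xv k) | exact: dderUU (xw k)].
have := dideal_sub (dideal_dder IH) (dideal_mul (<< ucm vk >> - << ucm wk >>) Ix).
rewrite leibnizE.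
have cancelE (R : comNzRingType) (g y a b a' b' : R) :
  g * a + y * a' - (g * b + y * b') - (a - b) * g = y * a' - y * b' by ring.
by rewrite cancelE.
Qed.

End DifferentialIdeal.

Section MinskyIdeal.
Variables (Phi : comNzRingType) (n : nat) (cmd : minsky_cmd).
Local Notation I := (@dideal Phi n (Igens cmd)).
Local Notation x1 := (dv X1 0 0 : dpoly Phi n).
Local Notation x2 := (dv X2 0 0 : dpoly Phi n).

Lemma dideal_gcmd i e s j al be :
  cmd i e s = Some (j, al, be) -> I (gcmd i e s j al be).
Proof. by move=> E; apply: dideal_gen; right; right; exists i, e, s, j, al, be. Qed.

Lemma dideal_x1M_shift2 i j a b a' b' k :
  I (x1 * dv (Q i) a b - x1 * dv (Q j) a' b') ->
  I (x1 * dv (Q i) a (b + k)%N - x1 * dv (Q j) a' (b' + k)%N).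
Proof.
have xQ y c d l : ((X1, 0, 0)%N : dvarT n) != iter l sh2 (Q y, c, d) by rewrite iter_sh2.
have Id2x1 : I (dv X1 0 1) by apply: dideal_gen; right; left.
have shifted := @dideal_iter_dderUM _ _ _ sh2 (@dideal_d2 _ _ _) (X1, 0, 0)%N
  (Q i, a, b) (Q j, a', b') k Id2x1 (xQ i a b) (xQ j a' b').
rewrite !iter_sh2 in shifted; exact: shifted.
Qed.

Lemma dideal_x2M_shift1 i j a b a' b' k :
  I (x2 * dv (Q i) a b - x2 * dv (Q j) a' b') ->
  I (x2 * dv (Q i) (a + k)%N b - x2 * dv (Q j) (a' + k)%N b').
Proof.
have xQ y c d l : ((X2, 0, 0)%N : dvarT n) != iter l sh1 (Q y, c, d) by rewrite iter_sh1.
have Id1x2 : I (dv X2 1 0) by apply: dideal_gen; left.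
have shifted := @dideal_iter_dderUM _ _ _ sh1 (@dideal_d1 _ _ _) (X2, 0, 0)%N
  (Q i, a, b) (Q j, a', b') k Id1x2 (xQ i a b) (xQ j a' b').
rewrite !iter_sh1 in shifted; exact: shifted.
Qed.

Lemma dideal_shift12 i j a b a' b' k l :
  I (dv (Q i) a b - dv (Q j) a' b') ->
  I (dv (Q i) (a + k)%N (b + l)%N - dv (Q j) (a' + k)%N (b' + l)%N).
Proof.
move=> /(dideal_iter_dderU (@dideal_d2 _ _ _) l) /(dideal_iter_dderU (@dideal_d1 _ _ _) k).
by rewrite !iter_sh2 !iter_sh1.
Qed.

Definition cpoly (c : config) : dpoly Phi n :=
  let: (i, a, b) := c in x1 * x2 * dv (Q i) a b.

Hypothesis cmd_wf : minsky_wf n cmd.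

Lemma dideal_mstep c c' : mstep cmd c = Some c' -> I (cpoly c - cpoly c').
Proof.
case: c => [[i a] b] /=; case E: (cmd i _ _) => [[[j al] be]|] // [<-].
have [_ _ /andP[al_ge _] /andP[be_ge _] [al_ge0 be_ge0]] := cmd_wf E.
case: a E al_ge0 => [|a] E al_ge0; case: b E be_ge0 => [|b] E be_ge0.
- exact: dideal_gcmd (E : cmd i true true = _).
- have Hg := dideal_gcmd (E : cmd i true false = _).
  have unitE (R : comNzRingType) (y1 y2 A B : R) :
    y1 ^+ true * y2 ^+ false * A - y1 ^+ true * y2 ^+ false * B = y1 * A - y1 * B.
    by rewrite expr1 expr0 mulr1.
  have factorE (R : comNzRingType) (y1 y2 A B : R) :
    y2 * (y1 * A - y1 * B) = y1 * y2 * A - y1 * y2 * B by ring.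
  rewrite /gcmd unitE in Hg; have {}Hg := dideal_mul x2 (dideal_x1M_shift2 b Hg).
  rewrite factorE (abszD1_addn b be_ge) in Hg; exact: Hg.
- have Hg := dideal_gcmd (E : cmd i false true = _).
  have unitE (R : comNzRingType) (y1 y2 A B : R) :
    y1 ^+ false * y2 ^+ true * A - y1 ^+ false * y2 ^+ true * B = y2 * A - y2 * B.
    by rewrite expr1 expr0 mul1r.
  have factorE (R : comNzRingType) (y1 y2 A B : R) :
    y1 * (y2 * A - y2 * B) = y1 * y2 * A - y1 * y2 * B by ring.
  rewrite /gcmd unitE in Hg; have {}Hg := dideal_mul x1 (dideal_x2M_shift1 a Hg).
  rewrite factorE (abszD1_addn a al_ge) in Hg; exact: Hg.
- have Hg := dideal_gcmd (E : cmd i false false = _).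
  have unitE (R : comNzRingType) (y1 y2 A B : R) :
    y1 ^+ false * y2 ^+ false * A - y1 ^+ false * y2 ^+ false * B = A - B.
    by rewrite !expr0 !mul1r.
  have factorE (R : comNzRingType) (y1 y2 A B : R) :
    y1 * y2 * (A - B) = y1 * y2 * A - y1 * y2 * B by ring.
  rewrite /gcmd unitE in Hg; have {}Hg := dideal_mul (x1 * x2) (dideal_shift12 a b Hg).
  rewrite factorE (abszD1_addn a al_ge) (abszD1_addn b be_ge) in Hg; exact: Hg.
Qed.

Lemma dideal_mrun k c c' : mrun cmd k c = Some c' -> I (cpoly c - cpoly c').
Proof.
elim: k c' => [|k IH] c' /=.
  by move=> [<-]; rewrite subrr; apply: dideal_0.
case run_k: (mrun cmd k c) => [c1|] //= step.
have telescopeE (R : comNzRingType) (p q r : R) : (p - q) + (q - r) = p - r by ring.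
by rewrite -(telescopeE _ _ (cpoly c1)); apply: dideal_add (IH _ run_k) (dideal_mstep step).
Qed.

End MinskyIdeal.

Theorem corollary2 (Phi : comNzRingType) (S : nat -> Prop)
  (n : nat) (cmd : minsky_cmd)
  (Hwf : minsky_wf n cmd) (Hacyc : macyclic cmd)
  (HS_in : forall x, S x -> mreaches cmd (1, 2 ^ (2 ^ x), 0)%N (0, 1, 0)%N)
  (HS_out : forall x, ~ S x -> mdiverges cmd (1, 2 ^ (2 ^ x), 0)%N)
  (m : nat) (Hm : S m) :
  dideal (Igens cmd) (gm m : dpoly Phi n).
Proof.
(* Only the halting direction matters here: acyclicity and divergence are unused. *)
have [k run_m] := HS_in m Hm.
exact: (@dideal_mrun Phi n cmd Hwf k _ _ run_m).
Qed.
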